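(* Let $L$ be a linear ordering and let $\Phi(L)$ be the colored linear ordering defined in the context. Then the structure $(L,<,s,p)$ is homogeneous if and only if $\Phi(L)$ is homogeneous.
   Context: For a linear ordering $L$, $s(x)$ is the immediate successor of $x$ if it exists and $x$ otherwise; $p(x)$ is the immediate predecessor of $x$ if it exists and $x$ otherwise. A structure is homogeneous if every isomorphism between finitely generated substructures extends to an automorphism. The equivalence relation $x\sim_1 y$ holds iff only finitely many elements lie between $x$ and $y$; its classes (1-blocks) are convex, and each is isomorphic to $\omega$, $\omega^*$, $\zeta$ or a finite $n\ge1$. $\Phi(L)$ is the quotient ordering $L/\sim_1$ (with $[x]<[y]$ iff $x<y$ for elements of distinct blocks), expanded by unary predicates $w,z,sw,c_n$ ($n\ge1$): $w([x])$ iff $[x]\cong\omega$, $z([x])$ iff $[x]\cong\zeta$, $sw([x])$ iff $[x]\cong\omega^*$, and $c_n([x])$ iff $[x]$ has exactly $n$ elements. $\Phi(L)$ is regarded as a structure in the language $(<,w,z,sw,\{c_n\}_{n\ge1})$. *)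

From Stdlib Require Import List Arith ZArith ClassicalEpsilon.
Import ListNotations.

Set Implicit Arguments.

Section LinOrd.
Variable T : Type.
Variable lt : T -> T -> Prop.

Definition linear_order : Prop :=
  (forall x, ~ lt x x) /\
  (forall x y z, lt x y -> lt y z -> lt x z) /\
  (forall x y, x <> y -> lt x y \/ lt y x).

Definition is_imm_succ (x y : T) : Prop :=
  lt x y /\ ~ (exists z, lt x z /\ lt z y).
Definition is_imm_pred (x y : T) : Prop :=
  lt y x /\ ~ (exists z, lt y z /\ lt z x).

(** s(x) = immediate successor of x if it exists, x otherwise *)
Definition succ_fun (x : T) : T :=
  match excluded_middle_informative (exists y, is_imm_succ x y) with
  | left H => proj1_sig (constructive_indefinite_description _ H)
  | right _ => x
  end.

(** p(x) = immediate predecessor of x if it exists, x otherwise *)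
Definition pred_fun (x : T) : T :=
  match excluded_middle_informative (exists y, is_imm_pred x y) with
  | left H => proj1_sig (constructive_indefinite_description _ H)
  | right _ => x
  end.

Inductive gen (l : list T) : T -> Prop :=
| gen_base : forall x, In x l -> gen l x
| gen_succ : forall x, gen l x -> gen l (succ_fun x)
| gen_pred : forall x, gen l x -> gen l (pred_fun x).

Definition fg_substructure (A : T -> Prop) : Prop :=
  exists l : list T, forall x, A x <-> gen l x.

Definition iso_sp (A B : T -> Prop) (f : T -> T) : Prop :=
  (forall x, A x -> B (f x)) /\
  (forall y, B y -> exists x, A x /\ f x = y) /\
  (forall x y, A x -> A y -> f x = f y -> x = y) /\
  (forall x y, A x -> A y -> (lt x y <-> lt (f x) (f y))) /\
  (forall x, A x -> f (succ_fun x) = succ_fun (f x)) /\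
  (forall x, A x -> f (pred_fun x) = pred_fun (f x)).

Definition aut_sp (g : T -> T) : Prop :=
  (forall x y, g x = g y -> x = y) /\
  (forall y, exists x, g x = y) /\
  (forall x y, lt x y <-> lt (g x) (g y)) /\
  (forall x, g (succ_fun x) = succ_fun (g x)) /\
  (forall x, g (pred_fun x) = pred_fun (g x)).

Definition homogeneous_sp : Prop :=
  forall (A B : T -> Prop) (f : T -> T),
    fg_substructure A -> fg_substructure B -> iso_sp A B f ->
    exists g, aut_sp g /\ forall x, A x -> g x = f x.

Definition strictly_between (x y z : T) : Prop :=
  (lt x z /\ lt z y) \/ (lt y z /\ lt z x).

Definition sim1 (x y : T) : Prop :=
  exists l : list T, forall z, strictly_between x y z -> In z l.

Definition block (x : T) : T -> Prop := fun y => sim1 x y.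

(** the quotient L / ~1, whose elements are the 1-blocks *)
Definition Phi : Type := { P : T -> Prop | exists x, P = block x }.

Definition Phi_lt (a b : Phi) : Prop :=
  exists x y, proj1_sig a x /\ proj1_sig b y /\ ~ sim1 x y /\ lt x y.

Definition block_iso_omega (x : T) : Prop :=
  exists h : nat -> T,
    (forall n, sim1 x (h n)) /\ (forall y, sim1 x y -> exists n, h n = y) /\
    (forall m n, m < n <-> lt (h m) (h n)).
Definition block_iso_omega_star (x : T) : Prop :=
  exists h : nat -> T,
    (forall n, sim1 x (h n)) /\ (forall y, sim1 x y -> exists n, h n = y) /\
    (forall m n, m < n <-> lt (h n) (h m)).
Definition block_iso_zeta (x : T) : Prop :=
  exists h : Z -> T,
    (forall n, sim1 x (h n)) /\ (forall y, sim1 x y -> exists n, h n = y) /\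
    (forall m n, (m < n)%Z <-> lt (h m) (h n)).
Definition block_card (n : nat) (x : T) : Prop :=
  exists l : list T, NoDup l /\ length l = n /\ forall y, sim1 x y <-> In y l.

Definition Phi_w (a : Phi) : Prop :=
  exists x, proj1_sig a x /\ block_iso_omega x.
Definition Phi_z (a : Phi) : Prop :=
  exists x, proj1_sig a x /\ block_iso_zeta x.
Definition Phi_sw (a : Phi) : Prop :=
  exists x, proj1_sig a x /\ block_iso_omega_star x.
Definition Phi_c (n : nat) (a : Phi) : Prop :=
  1 <= n /\ exists x, proj1_sig a x /\ block_card n x.

(* relational language: finitely generated substructures = finite subsets *)
Definition fin_subset (A : Phi -> Prop) : Prop :=
  exists l : list Phi, forall a, A a <-> In a l.

Definition iso_Phi (A B : Phi -> Prop) (f : Phi -> Phi) : Prop :=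
  (forall a, A a -> B (f a)) /\
  (forall b, B b -> exists a, A a /\ f a = b) /\
  (forall a b, A a -> A b -> f a = f b -> a = b) /\
  (forall a b, A a -> A b -> (Phi_lt a b <-> Phi_lt (f a) (f b))) /\
  (forall a, A a -> (Phi_w a <-> Phi_w (f a))) /\
  (forall a, A a -> (Phi_z a <-> Phi_z (f a))) /\
  (forall a, A a -> (Phi_sw a <-> Phi_sw (f a))) /\
  (forall n a, 1 <= n -> A a -> (Phi_c n a <-> Phi_c n (f a))).

Definition aut_Phi (g : Phi -> Phi) : Prop :=
  (forall a b, g a = g b -> a = b) /\
  (forall b, exists a, g a = b) /\
  (forall a b, Phi_lt a b <-> Phi_lt (g a) (g b)) /\
  (forall a, Phi_w a <-> Phi_w (g a)) /\
  (forall a, Phi_z a <-> Phi_z (g a)) /\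
  (forall a, Phi_sw a <-> Phi_sw (g a)) /\
  (forall n a, 1 <= n -> (Phi_c n a <-> Phi_c n (g a))).

Definition homogeneous_Phi : Prop :=
  forall (A B : Phi -> Prop) (f : Phi -> Phi),
    fin_subset A -> fin_subset B -> iso_Phi A B f ->
    exists g, aut_Phi g /\ forall a, A a -> g a = f a.

End LinOrd.

(* Since s and p never leave a 1-block, the substructure of (L,<,s,p) generated by finitely
   many points is the union of their finitely many blocks. An order isomorphism between two
   blocks automatically commutes with s and p, and two blocks are order isomorphic exactly when
   they have the same colour (w, z, sw or c_n), because every block is of one of the forms
   omega, omega*, zeta or n. Hence an isomorphism between finitely generated substructures of L
   is the same thing as an isomorphism between finite substructures of Phi(L) together with an
   order isomorphism of each block onto its image. An automorphism of L therefore induces one of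
   Phi(L), and an automorphism of Phi(L) lifts to L by gluing block isomorphisms, keeping the
   given ones on the blocks where the partial map is already defined. *)

From Stdlib Require Import List ZArith Lia ClassicalEpsilon Classical
  FunctionalExtensionality PropExtensionality ProofIrrelevance Wf_nat.
Import ListNotations.
Set Implicit Arguments.
Unset Strict Implicit.

Definition converse {T : Type} (R : T -> T -> Prop) (x y : T) : Prop := R y x.

Section LinearOrder.
Variables (T : Type) (R : T -> T -> Prop).
Hypothesis HR : linear_order R.

Lemma lin_irrefl x : ~ R x x.
Proof. apply HR. Qed.

Lemma lin_trans x y z : R x y -> R y z -> R x z.
Proof. apply HR. Qed.

Lemma lin_total x y : x = y \/ R x y \/ R y x.
Proof. destruct (classic (x = y)); auto. right. apply HR; auto. Qed.

Lemma lin_asym x y : R x y -> ~ R y x.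
Proof. intros Hxy Hyx. exact (lin_irrefl (lin_trans Hxy Hyx)). Qed.

Lemma linear_converse : linear_order (converse R).
Proof.
  unfold converse. destruct HR as [Hirr [Htr Htot]].
  split; [|split]; eauto.
Qed.

Section MonotoneMaps.
Variables (I : Type) (ltI : I -> I -> Prop) (P : I -> Prop) (h : I -> T).
Hypothesis ltI_total : forall i j, P i -> P j -> i = j \/ ltI i j \/ ltI j i.
Hypothesis h_mono : forall i j, P i -> P j -> ltI i j -> R (h i) (h j).

Lemma mono_reflects i j : P i -> P j -> (ltI i j <-> R (h i) (h j)).
Proof.
  intros Pi Pj. split; [auto|]. intros Hh.
  destruct (ltI_total Pi Pj) as [<-|[Hij|Hji]]; auto; exfalso.
  - exact (lin_irrefl Hh).
  - exact (lin_asym Hh (h_mono Pj Pi Hji)).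
Qed.

Lemma mono_injective i j : P i -> P j -> h i = h j -> i = j.
Proof.
  intros Pi Pj E. destruct (ltI_total Pi Pj) as [?|[Hij|Hji]]; [auto | exfalso..].
  - pose proof (h_mono Pi Pj Hij) as L. rewrite E in L. exact (lin_irrefl L).
  - pose proof (h_mono Pj Pi Hji) as L. rewrite E in L. exact (lin_irrefl L).
Qed.

End MonotoneMaps.

Lemma sim1_refl x : sim1 R x x.
Proof.
  exists []. intros z [[H1 H2]|[H1 H2]]; exact (lin_asym H1 H2).
Qed.

Lemma sim1_sym x y : sim1 R x y -> sim1 R y x.
Proof.
  intros [l Hl]. exists l. intros z Hz. apply Hl. unfold strictly_between in *. tauto.
Qed.

Lemma sim1_trans x y z : sim1 R x y -> sim1 R y z -> sim1 R x z.
Proof.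
  intros [l1 H1] [l2 H2]. exists (y :: l1 ++ l2). intros w Hw. simpl. rewrite in_app_iff.
  destruct (lin_total w y) as [E|[E|E]]; [auto|right..];
    destruct Hw as [[A B]|[A B]];
    solve [left; apply H1; unfold strictly_between; auto
          | right; apply H2; unfold strictly_between; auto].
Qed.

Lemma sim1_convex x y z : sim1 R x y -> R x z -> R z y -> sim1 R x z.
Proof.
  intros [l H] Hxz Hzy. exists l. intros w [[A B]|[A B]].
  - apply H. left. eauto using lin_trans.
  - exfalso. exact (lin_asym Hxz (lin_trans A B)).
Qed.

End LinearOrder.

Lemma sim1_converse T (R : T -> T -> Prop) x y : sim1 (converse R) x y <-> sim1 R x y.
Proof.
  unfold sim1, strictly_between, converse.
  split; intros [l Hl]; exists l; intros z Hz; apply Hl; tauto.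
Qed.

Definition imm {T : Type} (R : T -> T -> Prop) (x y : T) : Prop :=
  R x y /\ ~ (exists z, R x z /\ R z y).

Definition is_next {T : Type} (R : T -> T -> Prop) (sg : T -> T) : Prop :=
  forall x, imm R x (sg x) \/ ((~ exists y, imm R x y) /\ sg x = x).

Lemma succ_is_next T (lt : T -> T -> Prop) : is_next lt (succ_fun lt).
Proof.
  intro x. unfold succ_fun. destruct (excluded_middle_informative _) as [H|H].
  - left. exact (proj2_sig (constructive_indefinite_description _ H)).
  - right. auto.
Qed.

(* [pred_fun] is the successor function of the converse order: every fact about [s] proved
   for an arbitrary linear order and its [is_next] function also gives the dual fact about [p]. *)
Lemma pred_is_next T (lt : T -> T -> Prop) : is_next (converse lt) (pred_fun lt).
Proof.
  intro x. unfold pred_fun, imm, converse. destruct (excluded_middle_informative _) as [H|H].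
  - left. destruct (constructive_indefinite_description _ H) as [y [Hy N]]; simpl.
    split; [auto|]. intros [z [A B]]. eauto.
  - right. split; [|auto]. intros [y [Hy N]]. apply H. exists y. split; [auto|].
    intros [z [A B]]. eauto.
Qed.

Section NextFunction.
Variables (T : Type) (R : T -> T -> Prop) (sg : T -> T).
Hypothesis HR : linear_order R.
Hypothesis Hsg : is_next R sg.

Lemma imm_sim1 x y : imm R x y -> sim1 R x y.
Proof.
  intros [Hxy N]. exists []. intros z [[A B]|[A B]].
  - apply N. eauto.
  - exact (lin_asym HR Hxy (lin_trans HR A B)).
Qed.

Lemma next_imm x y : imm R x y -> sg x = y.
Proof.
  intros Hy. destruct (Hsg x) as [[Hs Ns]|[N _]]; [|exfalso; eauto].
  destruct Hy as [Hy Ny]. destruct (lin_total HR (sg x) y) as [E|[E|E]]; auto; exfalso; eauto.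
Qed.

Lemma sim1_next x : sim1 R x (sg x).
Proof.
  destruct (Hsg x) as [H|[_ ->]]; [apply imm_sim1; auto | apply sim1_refl; auto].
Qed.

Lemma sim1_iter_next n x : sim1 R x (Nat.iter n sg x).
Proof.
  induction n as [|n IH]; [apply sim1_refl; auto|].
  exact (sim1_trans HR IH (sim1_next _)).
Qed.

Lemma iter_next_fixed n x : sg x = x -> Nat.iter n sg x = x.
Proof. intros E. induction n as [|n IH]; simpl; congruence. Qed.

(* Induction on the list of elements between [x] and [y]: an element lying strictly
   between them splits the interval in two, any other element can be dropped. *)
Lemma iter_next_reaches x y : R x y -> sim1 R x y -> exists n, Nat.iter n sg x = y.
Proof.
  intros Hxy [l Hl].
  assert (Hcov : forall z, R x z -> R z y -> In z l) by (intros z ? ?; apply Hl; left; auto).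
  clear Hl. revert x y Hxy Hcov. induction l as [|a l IH]; intros x y Hxy Hcov.
  - exists 1. apply next_imm. split; [auto|]. intros [z [A B]]. exact (Hcov z A B).
  - destruct (classic (R x a /\ R a y)) as [[Hxa Hay]|Na].
    + destruct (IH x a Hxa) as [n1 E1].
      { intros z A B. destruct (Hcov z A (lin_trans HR B Hay)) as [->|]; auto.
        exfalso. exact (lin_irrefl HR B). }
      destruct (IH a y Hay) as [n2 E2].
      { intros z A B. destruct (Hcov z (lin_trans HR Hxa A) B) as [->|]; auto.
        exfalso. exact (lin_irrefl HR A). }
      exists (n2 + n1). rewrite Nat.iter_add. congruence.
    + apply IH; auto. intros z A B. destruct (Hcov z A B) as [->|]; tauto.
Qed.

Lemma next_increasing u v : R u v -> sim1 R u v -> R u (sg u).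
Proof.
  intros Huv Suv. destruct (Hsg u) as [[H _]|[_ Fix]]; auto.
  destruct (iter_next_reaches Huv Suv) as [n E].
  rewrite iter_next_fixed in E by auto. subst. exfalso. exact (lin_irrefl HR Huv).
Qed.

End NextFunction.

Definition iso_on {T : Type} (D E : T -> Prop) (R : T -> T -> Prop) (f : T -> T) : Prop :=
  (forall u, D u -> E (f u)) /\
  (forall v, E v -> exists u, D u /\ f u = v) /\
  (forall u v, D u -> D v -> (R u v <-> R (f u) (f v))).

Definition order_param {T : Type} (D : T -> Prop) (I : Type) (ltI : I -> I -> Prop)
    (R : T -> T -> Prop) : Prop :=
  exists h : I -> T, (forall i, D (h i)) /\ (forall y, D y -> exists i, h i = y) /\
    (forall i j, ltI i j <-> R (h i) (h j)).
Arguments order_param {T} D I ltI R.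

Definition listed {T : Type} (D : T -> Prop) (n : nat) : Prop :=
  exists l : list T, NoDup l /\ length l = n /\ forall y, D y <-> In y l.

Section IsoOn.
Variables (T : Type) (R : T -> T -> Prop).
Hypothesis HR : linear_order R.
Implicit Types (D E : T -> Prop) (f g : T -> T).

Lemma iso_on_converse D E f : iso_on D E R f -> iso_on D E (converse R) f.
Proof. intros [Hin [Hon Hord]]. split; [|split]; auto. intros u v Du Dv. apply Hord; auto. Qed.

Lemma iso_on_ext D E f g : iso_on D E R f -> (forall u, D u -> f u = g u) -> iso_on D E R g.
Proof.
  intros [Hin [Hon Hord]] Efg. split; [|split].
  - intros u Du. rewrite <- Efg; auto.
  - intros v Ev. destruct (Hon v Ev) as [u [Du <-]]. exists u. split; [|symmetry]; auto.
  - intros u v Du Dv. rewrite <- !Efg; auto.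
Qed.

Lemma iso_on_injective D E f u v : iso_on D E R f -> D u -> D v -> f u = f v -> u = v.
Proof.
  intros [_ [_ Hord]]. apply (mono_injective HR (ltI := R)).
  - intros i j _ _. apply lin_total; auto.
  - intros i j Di Dj. apply Hord; auto.
Qed.

Lemma iso_on_inverse D E f : iso_on D E R f -> exists g, iso_on E D R g.
Proof.
  intros Hf. pose proof Hf as [Hin [Hon Hord]].
  set (g v := epsilon (inhabits v) (fun u => D u /\ f u = v)).
  assert (Hg : forall v, E v -> D (g v) /\ f (g v) = v)
    by (intros v Ev; apply epsilon_spec; auto).
  exists g. split; [|split].
  - intros v Ev. apply Hg; auto.
  - intros u Du. exists (f u). split; auto.
    destruct (Hg (f u) (Hin u Du)). apply (iso_on_injective Hf); auto.
  - intros v w Ev Ew. destruct (Hg v Ev) as [Dv Fv], (Hg w Ew) as [Dw Fw].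
    rewrite (Hord _ _ Dv Dw), Fv, Fw. tauto.
Qed.

Lemma order_param_iso_on D E f I ltI :
  iso_on D E R f -> order_param D I ltI R -> order_param E I ltI R.
Proof.
  intros [Hin [Hon Hord]] [h [Dh [Sh Oh]]]. exists (fun i => f (h i)). split; [|split].
  - auto.
  - intros v Ev. destruct (Hon v Ev) as [u [Du <-]]. destruct (Sh u Du) as [i <-]. eauto.
  - intros i j. rewrite Oh. auto.
Qed.

Lemma listed_iso_on D E f n : iso_on D E R f -> listed D n -> listed E n.
Proof.
  intros Hf [l [Nl [Ll Hl]]]. pose proof Hf as [Hin [Hon _]].
  exists (map f l). split; [|split].
  - apply NoDup_map_NoDup_ForallPairs; auto.
    intros u v Iu Iv. apply (iso_on_injective Hf); apply Hl; auto.
  - rewrite length_map. auto.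
  - intros v. rewrite in_map_iff. split.
    + intros Ev. destruct (Hon v Ev) as [u [Du <-]]. exists u. rewrite <- Hl. auto.
    + intros [u [<- Iu]]. apply Hin, Hl. auto.
Qed.

Lemma iso_on_of_order_params D E I ltI :
  order_param D I ltI R -> order_param E I ltI R -> exists f, iso_on D E R f.
Proof.
  intros [h1 [D1 [S1 O1]]] [h2 [D2 [S2 O2]]].
  assert (Hwd : forall i j, h1 i = h1 j -> h2 i = h2 j).
  { intros i j E1. destruct (lin_total HR (h2 i) (h2 j)) as [?|[L|L]]; auto; exfalso;
      apply O2, O1 in L; rewrite E1 in L; exact (lin_irrefl HR L). }
  set (f u := epsilon (inhabits u) (fun v => forall i, h1 i = u -> v = h2 i)).
  assert (Hf : forall i, f (h1 i) = h2 i).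
  { intros i. apply (epsilon_spec (inhabits (h1 i)) (fun v => forall j, h1 j = h1 i -> v = h2 j));
      auto.
    exists (h2 i). intros j E1. symmetry. auto. }
  exists f. split; [|split].
  - intros u Du. destruct (S1 u Du) as [i <-]. rewrite Hf. auto.
  - intros v Ev. destruct (S2 v Ev) as [i <-]. exists (h1 i). auto.
  - intros u v Du Dv. destruct (S1 u Du) as [i <-], (S1 v Dv) as [j <-].
    rewrite !Hf, <- O1, <- O2. tauto.
Qed.

End IsoOn.

Lemma listed_unique T (D : T -> Prop) m n : listed D m -> listed D n -> m = n.
Proof.
  intros [l [Nl [<- Hl]]] [l' [Nl' [<- Hl']]].
  apply Nat.le_antisymm; apply NoDup_incl_length; auto; intros y Iy.
  - apply Hl', Hl. auto.
  - apply Hl, Hl'. auto.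
Qed.

Lemma listed_infinite T (D : T -> Prop) n (h : nat -> T) :
  listed D n -> (forall i, D (h i)) -> (forall i j, h i = h j -> i = j) -> False.
Proof.
  intros [l [Nl [<- Hl]]] Dh Hinj.
  assert (Hle : length (map h (seq 0 (S (length l)))) <= length l).
  { apply NoDup_incl_length.
    - apply NoDup_map_NoDup_ForallPairs; [intros i j _ _; auto | apply seq_NoDup].
    - intros y Iy. apply in_map_iff in Iy. destruct Iy as [i [<- _]]. apply Hl. auto. }
  rewrite length_map, length_seq in Hle. lia.
Qed.

Lemma block_eq T (R : T -> T -> Prop) (HR : linear_order R) x y :
  sim1 R x y -> block R x = block R y.
Proof.
  intros Sxy. extensionality z. apply propositional_extensionality. unfold block. split; intro H.
  - exact (sim1_trans HR (sim1_sym Sxy) H).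
  - exact (sim1_trans HR Sxy H).
Qed.

Lemma block_converse T (R : T -> T -> Prop) x : block (converse R) x = block R x.
Proof.
  extensionality z. apply propositional_extensionality. apply sim1_converse.
Qed.

Section Blocks.
Variables (T : Type) (R : T -> T -> Prop) (sg : T -> T).
Hypothesis HR : linear_order R.
Hypothesis Hsg : is_next R sg.

Lemma block_sim1 x u v : block R x u -> block R x v -> sim1 R u v.
Proof. intros Hu Hv. exact (sim1_trans HR (sim1_sym Hu) Hv). Qed.

Lemma block_convex x u v z : block R x u -> block R x v -> R u z -> R z v -> block R x z.
Proof.
  intros Hu Hv Huz Hzv. apply (sim1_trans HR Hu).
  exact (sim1_convex HR (block_sim1 Hu Hv) Huz Hzv).
Qed.

Lemma block_next x u : block R x u -> block R x (sg u).
Proof. intros Hu. exact (sim1_trans HR Hu (sim1_next HR Hsg u)). Qed.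

Lemma iso_on_block_imm x y f u v : iso_on (block R x) (block R y) R f ->
  block R x u -> block R x v -> (imm R u v <-> imm R (f u) (f v)).
Proof.
  intros [Hin [Hon Hord]] Hu Hv. unfold imm. rewrite (Hord u v Hu Hv).
  split; intros [Huv N]; split; auto; intros [z [A B]]; apply N.
  - destruct (Hon z (block_convex (Hin u Hu) (Hin v Hv) A B)) as [w [Hw <-]].
    exists w. split; [apply (Hord u w) | apply (Hord w v)]; auto.
  - pose proof (block_convex Hu Hv A B) as Hz.
    exists (f z). split; [apply (Hord u z) | apply (Hord z v)]; auto.
Qed.

Lemma iso_on_block_next x y f u : iso_on (block R x) (block R y) R f ->
  block R x u -> f (sg u) = sg (f u).
Proof.
  intros Hf Hu. pose proof Hf as [Hin [Hon _]].
  destruct (Hsg u) as [Hi|[Ni ->]].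
  - symmetry. apply (next_imm HR Hsg). exact (proj1 (iso_on_block_imm Hf Hu (block_next Hu)) Hi).
  - destruct (Hsg (f u)) as [Hi|[_ ->]]; auto. exfalso. apply Ni.
    destruct (Hon (sg (f u)) (block_next (Hin u Hu))) as [v [Hv Ev]].
    exists v. apply (iso_on_block_imm Hf Hu Hv). rewrite Ev. auto.
Qed.

End Blocks.

Definition is_block_max {T : Type} (R : T -> T -> Prop) (x M : T) : Prop :=
  block R x M /\ forall y, block R x y -> ~ R M y.
Definition is_block_min {T : Type} (R : T -> T -> Prop) (x m : T) : Prop :=
  block R x m /\ forall y, block R x y -> ~ R y m.

Definition enumerates {T : Type} (D : T -> Prop) (R : T -> T -> Prop) (N : nat) (h : nat -> T) :=
  (forall i, i <= N -> D (h i)) /\ (forall y, D y -> exists i, i <= N /\ h i = y) /\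
  (forall i j, i <= N -> j <= N -> (i < j <-> R (h i) (h j))).

Section Enumerations.
Variables (T : Type) (R : T -> T -> Prop).
Hypothesis HR : linear_order R.

Lemma increasing_upto (h : nat -> T) N :
  (forall i, i < N -> R (h i) (h (S i))) -> forall i j, i < j <= N -> R (h i) (h j).
Proof.
  intros Hstep i j Hij. induction j as [|j IH]; [lia|].
  destruct (Nat.eq_dec i j) as [->|Ne]; [apply Hstep; lia|].
  apply (lin_trans HR) with (h j); [apply IH | apply Hstep]; lia.
Qed.

Lemma increasing_nat (h : nat -> T) :
  (forall i, R (h i) (h (S i))) -> forall i j, i < j <-> R (h i) (h j).
Proof.
  intros Hstep i j. apply (mono_reflects HR (P := fun _ => True)); auto.
  - intros; lia.
  - intros i' j' _ _ Hij. apply (increasing_upto (N := j')); auto.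
Qed.

Lemma increasing_Z (h : Z -> T) :
  (forall z, R (h z) (h (z + 1)%Z)) -> forall m n, (m < n)%Z <-> R (h m) (h n).
Proof.
  intros Hstep m n. apply (mono_reflects HR (P := fun _ => True)); auto.
  - intros; lia.
  - intros a b _ _ Hab.
    pose proof (increasing_upto (h := fun k => h (a + Z.of_nat k)%Z) (N := Z.to_nat (b - a)))
      as Hinc.
    replace b with (a + Z.of_nat (Z.to_nat (b - a)))%Z at 1 by lia.
    replace a with (a + Z.of_nat 0)%Z at 1 by lia.
    apply Hinc; [|lia]. intros i _.
    replace (a + Z.of_nat (S i))%Z with (a + Z.of_nat i + 1)%Z by lia. apply Hstep.
Qed.

Lemma order_param_of_enumerates D N h : enumerates D R N h ->
  order_param D {i : nat | i <= N} (fun i j => proj1_sig i < proj1_sig j) R.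
Proof.
  intros [Dh [Sh Oh]]. exists (fun i => h (proj1_sig i)). split; [|split].
  - intros [i Hi]. auto.
  - intros y Dy. destruct (Sh y Dy) as [i [Hi <-]]. exists (exist _ i Hi). auto.
  - intros [i Hi] [j Hj]. apply Oh; auto.
Qed.

Lemma listed_of_enumerates D N h : enumerates D R N h -> listed D (S N).
Proof.
  intros [Dh [Sh Oh]]. exists (map h (seq 0 (S N))). split; [|split].
  - apply NoDup_map_NoDup_ForallPairs; [|apply seq_NoDup].
    intros i j Ii Ij. apply in_seq in Ii, Ij.
    apply (mono_injective HR (ltI := Peano.lt) (P := fun i => i <= N)); try lia.
    intros i' j' Hi' Hj'. apply Oh; auto.
  - rewrite length_map, length_seq. auto.
  - intros y. rewrite in_map_iff. split.
    + intros Dy. destruct (Sh y Dy) as [i [Hi <-]]. exists i. rewrite in_seq. split; [auto|lia].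
    + intros [i [<- Ii]]. apply in_seq in Ii. apply Dh. lia.
Qed.

End Enumerations.

Section BlockShapes.
Variables (T : Type) (R : T -> T -> Prop) (sg : T -> T).
Hypothesis HR : linear_order R.
Hypothesis Hsg : is_next R sg.

Lemma next_increasing_no_max x :
  ~ (exists M, is_block_max R x M) -> forall u, block R x u -> R u (sg u).
Proof.
  intros NM u Hu. destruct (classic (exists v, block R x v /\ R u v)) as [[v [Hv Huv]]|N].
  - exact (next_increasing HR Hsg Huv (block_sim1 HR Hu Hv)).
  - exfalso. apply NM. exists u. split; [auto|]. intros y Hy Huy. eauto.
Qed.

Lemma block_iter_next x m n : block R x m -> block R x (Nat.iter n sg m).
Proof. intros Hm. exact (sim1_trans HR Hm (sim1_iter_next HR Hsg n m)). Qed.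

Lemma block_reached_from_min x m y : is_block_min R x m -> block R x y ->
  exists n, Nat.iter n sg m = y.
Proof.
  intros [Hm Hmin] Hy. destruct (lin_total HR m y) as [<-|[Hmy|Hym]].
  - exists 0. auto.
  - exact (iter_next_reaches HR Hsg Hmy (block_sim1 HR Hm Hy)).
  - exfalso. exact (Hmin y Hy Hym).
Qed.

Lemma omega_of_min x m : is_block_min R x m -> ~ (exists M, is_block_max R x M) ->
  order_param (block R x) nat Peano.lt R.
Proof.
  intros Hmin NM. pose proof (proj1 Hmin) as Hm.
  exists (fun n => Nat.iter n sg m). split; [|split].
  - intros n. apply block_iter_next; auto.
  - intros y Hy. exact (block_reached_from_min Hmin Hy).
  - apply (increasing_nat HR). intros i.
    apply (next_increasing_no_max NM). apply block_iter_next; auto.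
Qed.

Lemma enumerates_of_min_max x m M : is_block_min R x m -> is_block_max R x M ->
  exists N, enumerates (block R x) R N (fun i => Nat.iter i sg m).
Proof.
  intros Hmin [HM Hmax]. pose proof (proj1 Hmin) as Hm.
  set (h i := Nat.iter i sg m).
  destruct (dec_inh_nat_subset_has_unique_least_element (fun n => h n = M)
    (fun n => classic _) (block_reached_from_min Hmin HM)) as [N [[HN Nleast] _]].
  assert (Hfix : sg M = M).
  { destruct (Hsg M) as [[HMs _]|[_ E]]; auto.
    exfalso. exact (Hmax _ (block_next HR Hsg HM) HMs). }
  assert (Hafter : forall i, N <= i -> h i = M).
  { intros i Hi. unfold h. replace i with ((i - N) + N) by lia.
    rewrite Nat.iter_add. fold (h N). rewrite HN. apply iter_next_fixed. auto. }
  exists N. split; [|split].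
  - intros i _. apply block_iter_next; auto.
  - intros y Hy. destruct (block_reached_from_min Hmin Hy) as [k <-].
    destruct (Nat.le_gt_cases k N) as [Hk|Hk]; [exists k; auto|].
    exists N. split; auto. fold (h k). rewrite (Hafter k) by lia. auto.
  - apply (mono_reflects HR (P := fun i => i <= N)); [intros; lia|].
    intros i j _ Hj Hij. apply (increasing_upto HR (N := j)); [|lia].
    intros k Hk. assert (Lk : R (h k) M).
    { destruct (lin_total HR (h k) M) as [E|[L|L]]; auto; exfalso.
      - specialize (Nleast k E). lia.
      - exact (Hmax _ (block_iter_next k Hm) L). }
    exact (next_increasing HR Hsg Lk (block_sim1 HR (block_iter_next k Hm) HM)).
Qed.

End BlockShapes.

Section BlockTypes.
Variables (T : Type) (lt : T -> T -> Prop).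
Hypothesis HL : linear_order lt.
Implicit Types (x y : T).

Lemma block_iter_pred x m n : block lt x m -> block lt x (Nat.iter n (pred_fun lt) m).
Proof.
  rewrite <- (block_converse lt x). apply (block_iter_next (linear_converse HL) (pred_is_next lt)).
Qed.

Lemma pred_decreasing_no_min x :
  ~ (exists m, is_block_min lt x m) -> forall u, block lt x u -> lt (pred_fun lt u) u.
Proof.
  intros Nm u. rewrite <- (block_converse lt x).
  apply (next_increasing_no_max (linear_converse HL) (pred_is_next lt)).
  unfold is_block_max. rewrite (block_converse lt x). exact Nm.
Qed.

Lemma omega_star_of_max x M : is_block_max lt x M -> ~ (exists m, is_block_min lt x m) ->
  block_iso_omega_star lt x.
Proof.
  intros HM Nm. change (order_param (block lt x) nat Peano.lt (converse lt)).
  rewrite <- (block_converse lt x).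
  apply (omega_of_min (linear_converse HL) (pred_is_next lt) (m := M));
    unfold is_block_min, is_block_max; rewrite (block_converse lt x); auto.
Qed.

Lemma zeta_of_no_min_max x : ~ (exists m, is_block_min lt x m) ->
  ~ (exists M, is_block_max lt x M) -> block_iso_zeta lt x.
Proof.
  intros Nm NM.
  set (h z := if (0 <=? z)%Z then Nat.iter (Z.to_nat z) (succ_fun lt) x
              else Nat.iter (Z.to_nat (- z)) (pred_fun lt) x).
  assert (Hpos : forall z, (0 <= z)%Z -> h z = Nat.iter (Z.to_nat z) (succ_fun lt) x).
  { intros z Hz. unfold h. destruct (Z.leb_spec 0 z); [auto | lia]. }
  assert (Hneg : forall z, (z <= 0)%Z -> h z = Nat.iter (Z.to_nat (- z)) (pred_fun lt) x).
  { intros z Hz. unfold h. destruct (Z.leb_spec 0 z); [|auto].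
    replace z with 0%Z by lia. auto. }
  assert (Hx : block lt x x) by apply (sim1_refl HL).
  exists h. split; [|split].
  - intros z. destruct (Z.leb_spec 0 z).
    + rewrite Hpos by auto. apply (block_iter_next HL (succ_is_next lt)). auto.
    + rewrite Hneg by lia. apply block_iter_pred. auto.
  - intros y Hy. destruct (lin_total HL x y) as [<-|[Hxy|Hyx]].
    + exists 0%Z. auto.
    + destruct (iter_next_reaches HL (succ_is_next lt) Hxy Hy) as [n <-].
      exists (Z.of_nat n). rewrite Hpos, Nat2Z.id by lia. auto.
    + destruct (iter_next_reaches (linear_converse HL) (pred_is_next lt) (x := x) (y := y))
        as [n <-]; [auto | apply sim1_converse; auto |].
      exists (- Z.of_nat n)%Z. rewrite Hneg by lia. f_equal. lia.
  - apply (increasing_Z HL). intros z. destruct (Z.ltb_spec z 0).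
    + rewrite !Hneg by lia. replace (Z.to_nat (- z)) with (S (Z.to_nat (- (z + 1)))) by lia.
      apply (pred_decreasing_no_min Nm). apply block_iter_pred. auto.
    + rewrite !Hpos by lia. replace (Z.to_nat (z + 1)) with (S (Z.to_nat z)) by lia.
      apply (next_increasing_no_max HL (succ_is_next lt) NM).
      apply (block_iter_next HL (succ_is_next lt)). auto.
Qed.

Lemma block_classification x :
  block_iso_omega lt x \/ block_iso_omega_star lt x \/ block_iso_zeta lt x \/
  exists N h, enumerates (block lt x) lt N h.
Proof.
  destruct (classic (exists m, is_block_min lt x m)) as [[m Hm]|Nm],
    (classic (exists M, is_block_max lt x M)) as [[M HM]|NM].
  - do 3 right. destruct (enumerates_of_min_max HL (succ_is_next lt) Hm HM) as [N HN]. eauto.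
  - left. exact (omega_of_min HL (succ_is_next lt) Hm NM).
  - right; left. exact (omega_star_of_max HM Nm).
  - right; right; left. exact (zeta_of_no_min_max Nm NM).
Qed.

End BlockTypes.

Lemma nat_param_not_listed T (D : T -> Prop) (R : T -> T -> Prop) n :
  linear_order R -> order_param D nat Peano.lt R -> ~ listed D n.
Proof.
  intros HR [h [Dh [_ Oh]]] Hl. apply (listed_infinite Hl Dh).
  intros i j. apply (mono_injective HR (ltI := Peano.lt) (P := fun _ => True) (h := h)); auto.
  - intros; lia.
  - intros i' j' _ _. apply Oh.
Qed.

Lemma Z_param_not_listed T (D : T -> Prop) (R : T -> T -> Prop) n :
  linear_order R -> order_param D Z Z.lt R -> ~ listed D n.
Proof.
  intros HR [h [Dh [_ Oh]]] Hl. apply (listed_infinite (h := fun i => h (Z.of_nat i)) Hl); auto.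
  intros i j E. apply Nat2Z.inj.
  apply (mono_injective HR (ltI := Z.lt) (P := fun _ => True) (h := h)); auto.
  - intros; lia.
  - intros i' j' _ _. apply Oh.
Qed.

Definition same_block_type {T : Type} (lt : T -> T -> Prop) (x y : T) : Prop :=
  (block_iso_omega lt x <-> block_iso_omega lt y) /\
  (block_iso_zeta lt x <-> block_iso_zeta lt y) /\
  (block_iso_omega_star lt x <-> block_iso_omega_star lt y) /\
  (forall n, block_card lt n x <-> block_card lt n y).

Section SameType.
Variables (T : Type) (lt : T -> T -> Prop).
Hypothesis HL : linear_order lt.

Lemma iso_on_same_block_type x y f :
  iso_on (block lt x) (block lt y) lt f -> same_block_type lt x y.
Proof.
  intros Hf. destruct (iso_on_inverse HL Hf) as [g Hg].
  change ((order_param (block lt x) nat Peano.lt lt <-> order_param (block lt y) nat Peano.lt lt)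
    /\ (order_param (block lt x) Z Z.lt lt <-> order_param (block lt y) Z Z.lt lt)
    /\ (order_param (block lt x) nat Peano.lt (converse lt)
        <-> order_param (block lt y) nat Peano.lt (converse lt))
    /\ (forall n, listed (block lt x) n <-> listed (block lt y) n)).
  split; [|split; [|split]]; try intros n; split;
    solve [ exact (order_param_iso_on Hf) | exact (order_param_iso_on Hg)
          | exact (order_param_iso_on (iso_on_converse Hf))
          | exact (order_param_iso_on (iso_on_converse Hg))
          | exact (listed_iso_on HL Hf) | exact (listed_iso_on HL Hg) ].
Qed.

Lemma iso_on_of_same_block_type x y :
  same_block_type lt x y -> exists f, iso_on (block lt x) (block lt y) lt f.
Proof.
  intros [Ew [Ez [Es Ec]]].
  destruct (block_classification HL x) as [Hx|[Hx|[Hx|[N [h HN]]]]].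
  - exact (iso_on_of_order_params HL Hx (proj1 Ew Hx)).
  - destruct (iso_on_of_order_params (linear_converse HL) Hx (proj1 Es Hx)) as [f Hf].
    exists f. exact (iso_on_converse Hf).
  - exact (iso_on_of_order_params HL Hx (proj1 Ez Hx)).
  - assert (Hy : listed (block lt y) (S N)) by exact (proj1 (Ec _) (listed_of_enumerates HL HN)).
    destruct (block_classification HL y) as [Ky|[Ky|[Ky|[N' [h' HN']]]]].
    + exfalso. exact (nat_param_not_listed HL Ky Hy).
    + exfalso. exact (nat_param_not_listed (linear_converse HL) Ky Hy).
    + exfalso. exact (Z_param_not_listed HL Ky Hy).
    + assert (N' = N) as ->.
      { pose proof (listed_unique (listed_of_enumerates HL HN') Hy). lia. }
      exact (iso_on_of_order_params HL (order_param_of_enumerates HN)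
               (order_param_of_enumerates HN')).
Qed.

End SameType.

Section Condensation.
Variables (T : Type) (lt : T -> T -> Prop).
Hypothesis HL : linear_order lt.
Implicit Types (x y u v : T) (a b : Phi lt).

Definition cls x : Phi lt := exist _ (block lt x) (ex_intro _ x eq_refl).

Definition rep a : T := proj1_sig (constructive_indefinite_description _ (proj2_sig a)).

Lemma cls_rep a : cls (rep a) = a.
Proof.
  unfold rep, cls. destruct a as [P HP]. simpl.
  destruct (constructive_indefinite_description _ HP) as [x Ex]. simpl. subst P.
  f_equal. apply proof_irrelevance.
Qed.

Lemma cls_eq x y : cls x = cls y <-> sim1 lt x y.
Proof.
  split.
  - intros E. change (block lt x y).
    replace (block lt x) with (block lt y) by exact (f_equal (@proj1_sig _ _) (eq_sym E)).
    apply (sim1_refl HL).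
  - intros Sxy. unfold cls. generalize (ex_intro (fun z => block lt x = block lt z) x eq_refl).
    rewrite (block_eq HL Sxy). intros e. f_equal. apply proof_irrelevance.
Qed.

Lemma block_rep_cls x : block lt x (rep (cls x)).
Proof. apply cls_eq. symmetry. apply cls_rep. Qed.

Lemma lt_across_blocks u v u' v' :
  ~ sim1 lt u v -> lt u v -> sim1 lt u u' -> sim1 lt v v' -> lt u' v'.
Proof.
  intros Nuv Luv Su Sv. destruct (lin_total HL u' v') as [<-|[L|L]]; [exfalso | auto | exfalso].
  - exact (Nuv (sim1_trans HL Su (sim1_sym Sv))).
  - apply Nuv. destruct (lin_total HL u v') as [<-|[L1|L1]].
    + exact (sim1_sym Sv).
    + exact (sim1_trans HL (sim1_convex HL Su L1 L) (sim1_sym Sv)).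
    + exact (sim1_trans HL (sim1_sym (sim1_convex HL (sim1_sym Sv) L1 Luv)) (sim1_sym Sv)).
Qed.

Lemma Phi_lt_cls x y : Phi_lt (cls x) (cls y) <-> ~ sim1 lt x y /\ lt x y.
Proof.
  split.
  - intros [x' [y' [Sx [Sy [N L]]]]]. simpl in Sx, Sy.
    assert (Nxy : ~ sim1 lt x y).
    { intros Sxy. apply N. exact (sim1_trans HL (sim1_sym Sx) (sim1_trans HL Sxy Sy)). }
    split; [auto|]. exact (lt_across_blocks N L (sim1_sym Sx) (sim1_sym Sy)).
  - intros [N L]. exists x, y. simpl. repeat split; auto; apply (sim1_refl HL).
Qed.

Lemma block_invariant (Q : (T -> Prop) -> Prop) x :
  (exists z, block lt x z /\ Q (block lt z)) <-> Q (block lt x).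
Proof.
  split.
  - intros [z [Sz Qz]]. rewrite (block_eq HL Sz). auto.
  - intros Qx. exists x. split; [apply (sim1_refl HL) | auto].
Qed.

Definition same_colour a b : Prop :=
  (Phi_w a <-> Phi_w b) /\ (Phi_z a <-> Phi_z b) /\ (Phi_sw a <-> Phi_sw b) /\
  (forall n, 1 <= n -> (Phi_c n a <-> Phi_c n b)).

Lemma block_card_pos n x : block_card lt n x -> 1 <= n.
Proof.
  intros [l [_ [<- Hl]]]. destruct l; simpl; [|lia].
  exfalso. apply (Hl x). apply (sim1_refl HL).
Qed.

Lemma same_colour_cls x y : same_colour (cls x) (cls y) <-> same_block_type lt x y.
Proof.
  assert (Hw : forall z, Phi_w (cls z) <-> block_iso_omega lt z)
    by (intros z; exact (block_invariant (fun D => order_param D nat Peano.lt lt) z)).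
  assert (Hz : forall z, Phi_z (cls z) <-> block_iso_zeta lt z)
    by (intros z; exact (block_invariant (fun D => order_param D Z Z.lt lt) z)).
  assert (Hs : forall z, Phi_sw (cls z) <-> block_iso_omega_star lt z)
    by (intros z; exact (block_invariant (fun D => order_param D nat Peano.lt (converse lt)) z)).
  assert (Hc : forall n z, 1 <= n -> (Phi_c n (cls z) <-> block_card lt n z)).
  { intros n z Hn. pose proof (block_invariant (fun D => listed D n) z) as [B1 B2].
    split; [intros [_ Hcz]; exact (B1 Hcz) | intros Hcz; exact (conj Hn (B2 Hcz))]. }
  assert (Ec : (forall n, 1 <= n -> (Phi_c n (cls x) <-> Phi_c n (cls y))) <->
               (forall n, block_card lt n x <-> block_card lt n y)).
  { split; intros E n.
    - split; intros Hn; pose proof (block_card_pos Hn) as Pn;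
        apply (Hc n _ Pn), (E n Pn), (Hc n _ Pn); exact Hn.
    - intros Pn. rewrite !Hc by auto. apply E. }
  unfold same_colour, same_block_type. rewrite !Hw, !Hz, !Hs, Ec. reflexivity.
Qed.

Lemma iso_Phi_same_colour (A B : Phi lt -> Prop) F a : iso_Phi A B F -> A a -> same_colour a (F a).
Proof.
  intros (_ & _ & _ & _ & Hw & Hz & Hs & Hc) Aa.
  split; [|split; [|split]]; auto.
Qed.

Definition block_iso a b : T -> T :=
  epsilon (inhabits (fun u => u)) (iso_on (block lt (rep a)) (block lt (rep b)) lt).

Lemma block_iso_spec a b :
  same_colour a b -> iso_on (block lt (rep a)) (block lt (rep b)) lt (block_iso a b).
Proof.
  intros Hab. unfold block_iso. apply epsilon_spec, (iso_on_of_same_block_type HL), same_colour_cls.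
  rewrite !cls_rep. auto.
Qed.

End Condensation.

Section Glue.
Variables (T : Type) (lt : T -> T -> Prop).
Hypothesis HL : linear_order lt.
Variables (A B : Phi lt -> Prop) (F : Phi lt -> Phi lt) (Psi : Phi lt -> T -> T).
Hypothesis HF : iso_Phi A B F.
Hypothesis HPsi : forall a, A a -> iso_on (block lt (rep a)) (block lt (rep (F a))) lt (Psi a).

Definition glue (x : T) : T := Psi (cls lt x) x.

Lemma glue_on_block x : A (cls lt x) ->
  iso_on (block lt x) (block lt (glue x)) lt glue /\ cls lt (glue x) = F (cls lt x).
Proof.
  intros Ax. pose proof (HPsi Ax) as Hx.
  rewrite <- (block_eq HL (block_rep_cls HL x)) in Hx.
  assert (Hgx : block lt (rep (F (cls lt x))) (glue x)) by exact (proj1 Hx x (sim1_refl HL x)).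
  split.
  - rewrite <- (block_eq HL Hgx). apply (iso_on_ext Hx). intros u Hu. unfold glue.
    replace (cls lt u) with (cls lt x) by (apply (cls_eq HL); auto). reflexivity.
  - rewrite <- (cls_rep (F (cls lt x))). apply (cls_eq HL). apply sim1_sym. auto.
Qed.

Lemma glue_increasing x y : A (cls lt x) -> A (cls lt y) -> lt x y -> lt (glue x) (glue y).
Proof.
  intros Ax Ay Lxy. destruct (glue_on_block Ax) as [[_ [_ Hord]] Ex].
  destruct (classic (sim1 lt x y)) as [Sxy|Nxy].
  - exact (proj1 (Hord x y (sim1_refl HL x) Sxy) Lxy).
  - destruct HF as (_ & _ & _ & Hlt & _).
    assert (Hphi : Phi_lt (cls lt x) (cls lt y)) by (apply (Phi_lt_cls HL); auto).
    apply Hlt in Hphi; auto. rewrite <- Ex, <- (proj2 (glue_on_block Ay)) in Hphi.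
    apply (Phi_lt_cls HL) in Hphi. tauto.
Qed.

Lemma glue_iso_sp : iso_sp lt (fun x => A (cls lt x)) (fun y => B (cls lt y)) glue.
Proof.
  pose proof HF as (Hin & Hon & _).
  assert (Htot : forall x y, A (cls lt x) -> A (cls lt y) -> x = y \/ lt x y \/ lt y x)
    by (intros; apply (lin_total HL)).
  split; [|split; [|split; [|split; [|split]]]].
  - intros x Ax. rewrite (proj2 (glue_on_block Ax)). auto.
  - intros y By. destruct (Hon _ By) as [a [Aa Ea]].
    assert (Ar : A (cls lt (rep a))) by (rewrite cls_rep; auto).
    destruct (glue_on_block Ar) as [[_ [Honb _]] Er].
    destruct (Honb y) as [u [Hu <-]].
    { apply (cls_eq HL). rewrite Er, cls_rep. auto. }
    exists u. split; auto. replace (cls lt u) with (cls lt (rep a)) by (apply (cls_eq HL); auto).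
    auto.
  - intros x y. apply (mono_injective HL Htot glue_increasing).
  - intros x y. apply (mono_reflects HL Htot glue_increasing).
  - intros x Ax. destruct (glue_on_block Ax) as [Hx _].
    exact (iso_on_block_next HL (succ_is_next lt) Hx (sim1_refl HL x)).
  - intros x Ax. destruct (glue_on_block Ax) as [Hx _].
    apply (iso_on_converse (R := lt)) in Hx.
    rewrite <- (block_converse lt x), <- (block_converse lt (glue x)) in Hx.
    exact (iso_on_block_next (linear_converse HL) (pred_is_next lt) Hx
             (sim1_refl (linear_converse HL) x)).
Qed.

End Glue.

Lemma iter_commute T (A : T -> Prop) (f sg : T -> T) n x :
  (forall y, A y -> A (sg y)) -> (forall y, A y -> f (sg y) = sg (f y)) -> A x ->
  A (Nat.iter n sg x) /\ f (Nat.iter n sg x) = Nat.iter n sg (f x).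
Proof.
  intros Hcl Hcomm Ax. induction n as [|n [IHA IHf]]; simpl; auto.
  split; auto. rewrite Hcomm, IHf; auto.
Qed.

Definition closed {T : Type} (lt : T -> T -> Prop) (A : T -> Prop) : Prop :=
  forall x y, A x -> sim1 lt x y -> A y.

Section Induced.
Variables (T : Type) (lt : T -> T -> Prop).
Hypothesis HL : linear_order lt.

Lemma block_iterates x u : block lt x u ->
  exists n, u = Nat.iter n (succ_fun lt) x \/ u = Nat.iter n (pred_fun lt) x.
Proof.
  intros Hu. destruct (lin_total HL x u) as [<-|[Hxu|Hux]].
  - exists 0. auto.
  - destruct (iter_next_reaches HL (succ_is_next lt) Hxu Hu) as [n <-]. eauto.
  - destruct (iter_next_reaches (linear_converse HL) (pred_is_next lt) (x := x) (y := u))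
      as [n <-]; [auto | apply sim1_converse; auto | eauto].
Qed.

Lemma closed_rep A x : closed lt A -> (A (rep (cls lt x)) <-> A x).
Proof.
  intros HA. pose proof (block_rep_cls HL x) as Sx.
  split; intros H; [exact (HA _ _ H (sim1_sym Sx)) | exact (HA _ _ H Sx)].
Qed.

Variables (A B : T -> Prop) (f : T -> T).
Hypotheses (HA : closed lt A) (HB : closed lt B) (Hf : iso_sp lt A B f).

Lemma iso_sp_block x : A x -> iso_on (block lt x) (block lt (f x)) lt f.
Proof.
  intros Ax. pose proof Hf as (Hin & Hon & Hinj & Hord & Hs & Hp).
  assert (Hsucc : forall n, A (Nat.iter n (succ_fun lt) x) /\
    f (Nat.iter n (succ_fun lt) x) = Nat.iter n (succ_fun lt) (f x)).
  { intros n. apply iter_commute; auto. intros y Ay. 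
    exact (HA Ay (sim1_next HL (succ_is_next lt) y)). }
  assert (Hpred : forall n, A (Nat.iter n (pred_fun lt) x) /\
    f (Nat.iter n (pred_fun lt) x) = Nat.iter n (pred_fun lt) (f x)).
  { intros n. apply iter_commute; auto. intros y Ay. apply (HA Ay), sim1_converse.
    exact (sim1_next (linear_converse HL) (pred_is_next lt) y). }
  assert (Hfx : block lt (f x) (f x)) by apply (sim1_refl HL).
  split; [|split].
  - intros u Hu. destruct (block_iterates Hu) as [n [-> | ->]].
    + rewrite (proj2 (Hsucc n)). apply (block_iter_next HL (succ_is_next lt)). auto.
    + rewrite (proj2 (Hpred n)). apply (block_iter_pred HL). auto.
  - intros v Hv. destruct (block_iterates Hv) as [n [-> | ->]].
    + exists (Nat.iter n (succ_fun lt) x). split; [|apply Hsucc].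
      apply (block_iter_next HL (succ_is_next lt)), (sim1_refl HL).
    + exists (Nat.iter n (pred_fun lt) x). split; [|apply Hpred].
      apply (block_iter_pred HL), (sim1_refl HL).
  - intros u v Hu Hv. exact (Hord u v (HA Ax Hu) (HA Ax Hv)).
Qed.

Lemma iso_sp_sim1 x y : A x -> A y -> (sim1 lt x y <-> sim1 lt (f x) (f y)).
Proof.
  intros Ax Ay. destruct (iso_sp_block Ax) as [Hin [Hon _]]. split; [exact (Hin y)|].
  intros S. destruct (Hon _ S) as [u [Hu Eu]].
  replace y with u; [auto|]. apply Hf; auto. exact (HA Ax Hu).
Qed.

Definition induced (a : Phi lt) : Phi lt := cls lt (f (rep a)).

Lemma induced_cls x : A x -> induced (cls lt x) = cls lt (f x).
Proof.
  intros Ax. apply (cls_eq HL), sim1_sym.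
  exact (proj1 (iso_sp_block Ax) _ (block_rep_cls HL x)).
Qed.

Lemma iso_Phi_induced : iso_Phi (fun a => A (rep a)) (fun b => B (rep b)) induced.
Proof.
  pose proof Hf as (Hin & Hon & Hinj & Hord & _).
  assert (Hcol : forall a, A (rep a) -> same_colour a (induced a)).
  { intros a Aa. unfold induced. rewrite <- (cls_rep a) at 1.
    apply (same_colour_cls HL). exact (iso_on_same_block_type HL (iso_sp_block Aa)). }
  split; [|split; [|split; [|split]]].
  - intros a Aa. apply (closed_rep _ HB). auto.
  - intros b Bb. destruct (Hon _ Bb) as [x [Ax Ex]]. exists (cls lt x).
    split; [apply (closed_rep _ HA); auto|]. rewrite induced_cls, Ex by auto. apply cls_rep.
  - intros a b Aa Ab E. rewrite <- (cls_rep a), <- (cls_rep b). apply (cls_eq HL).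
    apply (iso_sp_sim1 Aa Ab). apply (cls_eq HL). exact E.
  - intros a b Aa Ab. rewrite <- (cls_rep a), <- (cls_rep b), !induced_cls by auto.
    rewrite !(Phi_lt_cls HL), <- (iso_sp_sim1 Aa Ab), <- (Hord _ _ Aa Ab). tauto.
  - split; [|split; [|split]]; [intros a Aa .. | intros n a Hn Aa];
      destruct (Hcol a Aa) as (Ew & Ez & Es & Ec); auto.
Qed.

End Induced.

Lemma aut_sp_iso_sp T (lt : T -> T -> Prop) g :
  aut_sp lt g <-> iso_sp lt (fun _ => True) (fun _ => True) g.
Proof.
  split.
  - intros (Hinj & Hsurj & Hord & Hs & Hp). split; [|split; [|split; [|split; [|split]]]]; auto.
    intros y _. destruct (Hsurj y) as [x <-]. eauto.
  - intros (_ & Hon & Hinj & Hord & Hs & Hp). split; [|split; [|split; [|split]]]; auto.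
    intros y. destruct (Hon y I) as [x [_ <-]]. eauto.
Qed.

Lemma aut_Phi_iso_Phi T (lt : T -> T -> Prop) (G : Phi lt -> Phi lt) :
  aut_Phi G <-> iso_Phi (fun _ => True) (fun _ => True) G.
Proof.
  split.
  - intros (Hinj & Hsurj & Hord & Hw & Hz & Hs & Hc).
    split; [|split; [|split; [|split; [|split; [|split; [|split]]]]]]; auto.
    intros b _. destruct (Hsurj b) as [a <-]. eauto.
  - intros (_ & Hon & Hinj & Hord & Hw & Hz & Hs & Hc).
    split; [|split; [|split; [|split; [|split; [|split]]]]]; auto.
    intros b. destruct (Hon b I) as [a [_ <-]]. eauto.
Qed.

Section Homogeneity.
Variables (T : Type) (lt : T -> T -> Prop).
Hypothesis HL : linear_order lt.

Lemma gen_block l x : gen lt l x <-> exists a, In a l /\ block lt a x.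
Proof.
  split.
  - induction 1 as [x Hx|x _ [a [Ha Sa]]|x _ [a [Ha Sa]]];
      [exists x; split; auto; apply (sim1_refl HL)|..];
      exists a; split; auto; apply (sim1_trans HL Sa).
    + exact (sim1_next HL (succ_is_next lt) x).
    + apply sim1_converse. exact (sim1_next (linear_converse HL) (pred_is_next lt) x).
  - intros [a [Ha Sa]]. assert (Ga : gen lt l a) by (apply gen_base; auto).
    destruct (block_iterates HL Sa) as [n [-> | ->]]; clear Sa; induction n as [|n IH]; simpl; auto.
    + apply gen_succ. auto.
    + apply gen_pred. auto.
Qed.

Lemma fg_closed A : fg_substructure lt A -> closed lt A.
Proof.
  intros [l Hl] x y Ax Sxy. apply Hl. apply Hl, gen_block in Ax. apply gen_block.
  destruct Ax as [a [Ha Sa]]. exists a. split; auto. exact (sim1_trans HL Sa Sxy).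
Qed.

Lemma fin_subset_of_fg A : fg_substructure lt A -> fin_subset (fun a : Phi lt => A (rep a)).
Proof.
  intros [l Hl]. exists (map (cls lt) l). intros a. rewrite Hl, gen_block, in_map_iff.
  split; intros [x [Hx Sx]].
  - exists x. split; auto. rewrite <- (cls_rep a). apply (cls_eq HL). auto.
  - exists x. split; auto. rewrite <- Hx. apply block_rep_cls. auto.
Qed.

Lemma fg_of_fin_subset (A : Phi lt -> Prop) :
  fin_subset A -> fg_substructure lt (fun x => A (cls lt x)).
Proof.
  intros [l Hl]. exists (map (@rep T lt) l). intros x. rewrite Hl, gen_block.
  split.
  - intros Ix. exists (rep (cls lt x)). split; [apply in_map; auto|].
    apply sim1_sym, block_rep_cls. auto.
  - intros [y [Iy Sy]]. apply in_map_iff in Iy. destruct Iy as [a [<- Ia]].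
    replace (cls lt x) with a; auto. rewrite <- (cls_rep a). apply (cls_eq HL). auto.
Qed.

Lemma homogeneous_Phi_of_sp : homogeneous_sp lt -> homogeneous_Phi lt.
Proof.
  intros Hsp A B F FA FB HF.
  set (Psi a := block_iso a (F a)).
  assert (HPsi : forall a, A a -> iso_on (block lt (rep a)) (block lt (rep (F a))) lt (Psi a))
    by (intros a Aa; apply (block_iso_spec HL), (iso_Phi_same_colour HF); auto).
  destruct (Hsp _ _ (glue Psi) (fg_of_fin_subset FA) (fg_of_fin_subset FB) (glue_iso_sp HL HF HPsi))
    as [g [Hg Hext]].
  exists (induced g). split.
  - apply aut_Phi_iso_Phi. apply aut_sp_iso_sp in Hg.
    exact (iso_Phi_induced HL (fun _ _ _ _ => I) (fun _ _ _ _ => I) Hg).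
  - intros a Aa. assert (Ar : A (cls lt (rep a))) by (rewrite cls_rep; auto).
    unfold induced. rewrite Hext by auto.
    rewrite (proj2 (glue_on_block HL HPsi Ar)), cls_rep. reflexivity.
Qed.

Lemma homogeneous_sp_of_Phi : homogeneous_Phi lt -> homogeneous_sp lt.
Proof.
  intros HPhi A B f FA FB Hf. pose proof (fg_closed FA) as HA. pose proof (fg_closed FB) as HB.
  destruct (HPhi _ _ _ (fin_subset_of_fg FA) (fin_subset_of_fg FB) (iso_Phi_induced HL HA HB Hf))
    as [G [HG Hext]].
  apply aut_Phi_iso_Phi in HG.
  set (Psi a := if excluded_middle_informative (A (rep a)) then f else block_iso a (G a)).
  assert (HPsi : forall a, True -> iso_on (block lt (rep a)) (block lt (rep (G a))) lt (Psi a)).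
  { intros a _. unfold Psi. destruct (excluded_middle_informative _) as [Aa|_].
    - rewrite Hext by auto. unfold induced.
      rewrite <- (block_eq HL (block_rep_cls HL (f (rep a)))). exact (iso_sp_block HL HA Hf Aa).
    - apply (block_iso_spec HL), (iso_Phi_same_colour HG). auto. }
  exists (glue Psi). split.
  - apply aut_sp_iso_sp. exact (glue_iso_sp HL HG HPsi).
  - intros x Ax. unfold glue, Psi. destruct (excluded_middle_informative _) as [_|N]; [auto|].
    exfalso. apply N, (closed_rep HL _ HA). auto.
Qed.

End Homogeneity.

Theorem mainTheorem3 (T : Type) (lt : T -> T -> Prop) (HL : linear_order lt) :
  homogeneous_sp lt <-> homogeneous_Phi lt.
Proof.
  split; [apply homogeneous_Phi_of_sp | apply homogeneous_sp_of_Phi]; auto.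
Qed.
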